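(* Let $\mathcal{A}*\mathcal{X}=\mathcal{B}$ be a consistent tensor system with unique solution $\mathcal{X}^*$, where $\mathcal{A}\in\mathbb{R}^{n_1\times n_2\times n}$ and $\mathcal{B}\in\mathbb{R}^{n_1\times n_3\times n}$. Let $\alpha>0$ and $$\kappa=\max_{i=1,\dots,n}\|\mathcal{I}-\alpha\tilde{\mathcal{A}}_i^T*\tilde{\mathcal{A}}_i\|_{op},\qquad \mu=\max_{i,j\in\{1,\dots,n\},\,i\neq j}\|\tilde{\mathcal{A}}_i^T*\tilde{\mathcal{A}}_j\|_{op}.$$ If $\kappa+\alpha\mu(n-1)<1$, then the iterates $\mathcal{X}(t)$ of cyclic frontal slice descent (block size $1$) with learning rate $\alpha$ satisfy $\mathcal{E}(t)=\|\mathcal{X}(t)-\mathcal{X}^*\|_F^2\to 0$ as $t\to\infty$.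
   Context: For $\mathcal{A}\in\mathbb{R}^{n_1\times n_2\times n}$ with frontal slices $A_k=\mathcal{A}(:,:,k)$: $\mathrm{unfold}(\mathcal{A})$ stacks $A_1,\dots,A_n$ vertically, $\mathrm{fold}$ is its inverse, $\mathrm{bcirc}(\mathcal{A})$ is the $n_1n\times n_2n$ block-circulant matrix with $(p,q)$ block $A_{((p-q)\bmod n)+1}$, and the t-product is $\mathcal{A}*\mathcal{X}=\mathrm{fold}(\mathrm{bcirc}(\mathcal{A})\mathrm{unfold}(\mathcal{X}))$. The identity tensor $\mathcal{I}$ has first frontal slice equal to the identity matrix and all other frontal slices zero. The transpose $\mathcal{A}^T$ transposes each frontal slice and reverses the order of slices $2,\dots,n$. $\|\cdot\|_F$ is the entrywise Frobenius norm and $\|\mathcal{C}\|_{op}=\sup_{\|\mathcal{X}\|_F=1}\|\mathcal{C}*\mathcal{X}\|_F=\|\mathrm{bcirc}(\mathcal{C})\|_2$. For $k\in\{1,\dots,n\}$, $\tilde{\mathcal{A}}_k\in\mathbb{R}^{n_1\times n_2\times n}$ has $k$-th frontal slice $A_k$ and all other frontal slices zero. Cyclic frontal slice descent with learning rate $\alpha$: set $\mathcal{X}(t)=0$ for all $t\le 0$; for $t=0,1,2,\dots$ let $\mathcal{R}(t+1)=\mathcal{B}-\sum_{j=0}^{n-1}\tilde{\mathcal{A}}_{((t-j)\bmod n)+1}*\mathcal{X}(t-j)$ and $\mathcal{X}(t+1)=\mathcal{X}(t)+\alpha\,\tilde{\mathcal{A}}_{(t\bmod n)+1}^T*\mathcal{R}(t+1)$.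 *)

From HB Require Import structures.
From mathcomp Require Import all_boot all_order all_algebra.
From mathcomp Require Import all_classical all_reals all_analysis.
Set Implicit Arguments. Unset Strict Implicit. Unset Printing Implicit Defensive.
Import Order.TTheory GRing.Theory Num.Theory.
Local Open Scope ring_scope.

Section Tensors.
Variable R : realType.

(* a real third-order tensor in R^{a x b x n}: its n frontal slices (0-based) *)
Definition tensor (a b n : nat) := 'I_n -> 'M[R]_(a, b).

Definition tzero a b n : tensor a b n := fun _ => 0.
Definition tadd a b n (X Y : tensor a b n) : tensor a b n := fun k => X k + Y k.
Definition tsub a b n (X Y : tensor a b n) : tensor a b n := fun k => X k - Y k.
Definition tscale a b n (c : R) (X : tensor a b n) : tensor a b n :=
  fun k => c *: X k.

Lemma subo_proof n (p q : 'I_n) : ((p + n - q) %% n < n)%N.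
Proof. by rewrite ltn_mod (leq_ltn_trans (leq0n p) (ltn_ord p)). Qed.
Definition subo n (p q : 'I_n) : 'I_n := Ordinal (subo_proof p q).

(* t-product: fold (bcirc A * unfold X); block (p,q) of bcirc A is A_((p-q) mod n) *)
Definition tprod a b c n (A : tensor a b n) (X : tensor b c n) : tensor a c n :=
  fun p => \sum_(q < n) A (subo p q) *m X q.

Definition tid a n : tensor a a n :=
  fun k => if val k == 0%N then 1%:M else 0.

(* transpose: transpose each slice, reverse slices 2..n;
   slice k (0-based) of A^T is (A_((0 - k) mod n))^T; note subo k k has value 0 *)
Definition ttr a b n (A : tensor a b n) : tensor b a n :=
  fun k => (A (subo (subo k k) k))^T.

(* \tilde A_k for a 0-based slice index k (as a nat): keep slice k, zero the rest *)
Definition tslice a b n (A : tensor a b n) (k : nat) : tensor a b n :=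
  fun j => if val j == k then A j else 0.

Definition frob2 a b n (X : tensor a b n) : R :=
  \sum_(k < n) \sum_(i < a) \sum_(j < b) X k i j ^+ 2.

(* operator norm sup_{||X||_F = 1} ||C * X||_F = ||bcirc C||_2, with X ranging over
   tensors with a single lateral slice (i.e. X = fold of a vector) *)
Definition topnorm a b n (C : tensor a b n) : R :=
  sup [set r : R | exists X : tensor b 1 n,
         frob2 X = 1 /\ r = Num.sqrt (frob2 (tprod C X))].

Definition kappa a b n (alpha : R) (A : tensor a b n) : R :=
  \big[Num.max/0]_(i < n)
     topnorm (tsub (@tid b n) (tscale alpha (tprod (ttr (tslice A i)) (tslice A i)))).

Definition mu a b n (A : tensor a b n) : R :=
  \big[Num.max/0]_(i < n) \big[Num.max/0]_(j < n | i != j)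
     topnorm (tprod (ttr (tslice A i)) (tslice A j)).

(* Cyclic frontal slice descent. hist t = [:: X(t); X(t-1); ...; X(0)],
   so that nth (tzero) (hist t) j = X(t-j), which is 0 when t - j < 0. *)
Definition cfsd_step a b c n (alpha : R) (A : tensor a b n) (B : tensor a c n)
    (t : nat) (h : seq (tensor b c n)) : tensor b c n :=
  let Res := tsub B (\big[@tadd a c n/@tzero a c n]_(j < n)
                        tprod (tslice A ((t + n - j) %% n)%N) (nth (@tzero b c n) h j)) in
  tadd (head (@tzero b c n) h)
       (tscale alpha (tprod (ttr (tslice A (t %% n)%N)) Res)).

Fixpoint cfsd_hist a b c n (alpha : R) (A : tensor a b n) (B : tensor a c n)
    (t : nat) : seq (tensor b c n) :=
  match t with
  | 0 => [:: @tzero b c n]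
  | t'.+1 => let h := cfsd_hist alpha A B t' in cfsd_step alpha A B t' h :: h
  end.

Definition cfsd a b c n (alpha : R) (A : tensor a b n) (B : tensor a c n)
    (t : nat) : tensor b c n :=
  head (@tzero b c n) (cfsd_hist alpha A B t).

End Tensors.

(* Let E(t) = X(t) - X*.  Since B = A * X* = sum_j Ã_(c-j) * X* with c = t mod n,
   one step of the method reads
     E(t+1) = (I - α Ã_c^T * Ã_c) * E(t) - α sum_(j=1..n-1) (Ã_c^T * Ã_(c-j)) * E(t-j).
   Bounding every t-product by its operator norm gives
     ‖E(t+1)‖ <= κ ‖E(t)‖ + α μ sum_(j=1..n-1) ‖E(t-j)‖,
   so the error shrinks by the factor ρ = κ + α μ (n-1) < 1 over every window of n
   steps: ‖E(t)‖ <= ‖E(0)‖ ρ^(t / n) -> 0. *)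

From HB Require Import structures.
From mathcomp Require Import all_boot all_order all_algebra.
From mathcomp Require Import all_classical all_reals all_analysis.
From mathcomp Require Import ring lra.
Import Order.TTheory GRing.Theory Num.Theory.
Set Implicit Arguments. Unset Strict Implicit. Unset Printing Implicit Defensive.
Local Open Scope classical_set_scope.
Local Open Scope ring_scope.

Section FiniteSums.
Variables (R : realType) (I : finType).

Lemma cauchy_schwarz_sum (f g : I -> R) :
  (\sum_i f i * g i) ^+ 2 <= (\sum_i f i ^+ 2) * (\sum_i g i ^+ 2).
Proof.
set a := \sum_i f i ^+ 2; set b := \sum_i f i * g i; set c := \sum_i g i ^+ 2.
have a_ge0 : 0 <= a by apply: sumr_ge0 => i _; exact: sqr_ge0.
have [a_eq0|a_gt0] := eqVneq a 0; last first.
  have key : \sum_i (a * g i - b * f i) ^+ 2 = a * (a * c - b ^+ 2).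
    transitivity (\sum_i (a ^+ 2 * g i ^+ 2 - (2 * a * b) * (f i * g i) + b ^+ 2 * f i ^+ 2)).
      by apply: eq_bigr => i _; ring.
    by rewrite big_split sumrB /= -!mulr_sumr -/a -/b -/c; ring.
  have : 0 <= a * (a * c - b ^+ 2) by rewrite -key sumr_ge0 // => i _; exact: sqr_ge0.
  by rewrite pmulr_rge0 ?subr_ge0 // lt_def a_gt0.
have f0 i : f i = 0.
  apply/eqP; rewrite -sqrf_eq0; apply/eqP.
  by apply: (psumr_eq0P _ a_eq0) => // j _; exact: sqr_ge0.
by rewrite /b big1 ?a_eq0 ?expr0n ?mul0r //= => i _; rewrite f0 mul0r.
Qed.

Lemma minkowski_sum (f g : I -> R) :
  Num.sqrt (\sum_i (f i + g i) ^+ 2) <=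
  Num.sqrt (\sum_i f i ^+ 2) + Num.sqrt (\sum_i g i ^+ 2).
Proof.
set a := \sum_i f i ^+ 2; set b := \sum_i f i * g i; set c := \sum_i g i ^+ 2.
have a_ge0 : 0 <= a by apply: sumr_ge0 => i _; exact: sqr_ge0.
have c_ge0 : 0 <= c by apply: sumr_ge0 => i _; exact: sqr_ge0.
have -> : \sum_i (f i + g i) ^+ 2 = a + 2 * b + c.
  under eq_bigr do rewrite sqrrD -mulr_natl.
  by rewrite !big_split /= -mulr_sumr.
have b_le : b <= Num.sqrt a * Num.sqrt c.
  rewrite -sqrtrM // (le_trans (ler_norm b)) // -sqrtr_sqr ler_wsqrtr //.
  exact: cauchy_schwarz_sum.
rewrite -(ger0_norm (addr_ge0 (sqrtr_ge0 a) (sqrtr_ge0 c))) -sqrtr_sqr.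
by rewrite ler_wsqrtr // sqrrD !sqr_sqrtr //; lra.
Qed.

End FiniteSums.

Section DelayedContraction.
Variables (R : realType) (g : nat -> R) (k l : R) (m : nat).
Hypotheses (k_ge0 : 0 <= k) (l_ge0 : 0 <= l) (g_ge0 : forall t, 0 <= g t).
Hypothesis rho_le1 : k + l * m%:R <= 1.
Hypothesis g_rec : forall t, g t.+1 <= k * g t + l * \sum_(j < m) g (t - j.+1)%N.

Local Notation rho := (k + l * m%:R).

Lemma delayed_contraction t : g t <= g 0%N * rho ^+ (t %/ m.+1).
Proof.
have rho_ge0 : 0 <= rho by rewrite addr_ge0 ?mulr_ge0.
elim/ltn_ind: t => -[_|s IH]; first by rewrite div0n expr0 mulr1.
set e := (s.+1 %/ m.+1)%N; set M := g 0%N * rho ^+ e.-1.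
have window u : (s - m <= u <= s)%N -> g u <= M.
  case/andP => le_smu le_us; apply: le_trans (IH u _) _; first by rewrite ltnS.
  rewrite ler_wpM2l ?g_ge0 // ler_wiXn2l //.
  have -> : e.-1 = ((s.+1 - m.+1) %/ m.+1)%N by rewrite divnBr // divnn subn1.
  by rewrite subSS leq_div2r.
have sum_le : \sum_(j < m) g (s - j.+1)%N <= m%:R * M.
  apply: (@le_trans _ _ (\sum_(j < m) M)); last by rewrite sumr_const card_ord mulr_natl.
  apply: ler_sum => j _; apply: window.
  by rewrite leq_sub2l ?leq_subr // ltn_ord.
have gs_le : g s <= M by apply: window; rewrite leq_subr leqnn.
apply: le_trans (g_rec s) _.
apply: (@le_trans _ _ (rho * M)).
  have := ler_wpM2l k_ge0 gs_le; have := ler_wpM2l l_ge0 sum_le; nra.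
rewrite /M mulrCA ler_wpM2l ?g_ge0 //.
by case: (e) => [|e']; rewrite ?expr0 ?mulr1 // -exprS.
Qed.

End DelayedContraction.

Lemma cvg_expr_divn (R : realType) (r : R) N : (0 < N)%N -> 0 <= r -> r < 1 ->
  r ^+ (t %/ N) @[t --> \oo] --> 0.
Proof.
move=> N_gt0 r_ge0 r_lt1.
have divN_cvg : (t %/ N)%N @[t --> \oo] --> \oo.
  move=> P [M _ PM]; exists (M * N)%N => // t /= leMNt.
  by apply: PM; rewrite /= leq_divRL.
by apply: cvg_comp divN_cvg (cvg_expr _); rewrite ger0_norm.
Qed.

Section Tensors.
Variable R : realType.

Definition tnorm a b n (X : tensor R a b n) := Num.sqrt (frob2 X).

Lemma frob2_pair a b n (X : tensor R a b n) :
  frob2 X = \sum_(p : 'I_n * ('I_a * 'I_b)) X p.1 p.2.1 p.2.2 ^+ 2.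
Proof. by rewrite /frob2; under eq_bigr do rewrite pair_big; rewrite pair_big. Qed.

Lemma frob2_ge0 a b n (X : tensor R a b n) : 0 <= frob2 X.
Proof. by rewrite frob2_pair sumr_ge0 // => p _; exact: sqr_ge0. Qed.

Lemma tnorm_ge0 a b n (X : tensor R a b n) : 0 <= tnorm X.
Proof. exact: sqrtr_ge0. Qed.

Lemma sqr_tnorm a b n (X : tensor R a b n) : tnorm X ^+ 2 = frob2 X.
Proof. by rewrite sqr_sqrtr // frob2_ge0. Qed.

Lemma frob2Z a b n (k : R) (X : tensor R a b n) : frob2 (k *: X) = k ^+ 2 * frob2 X.
Proof. by rewrite !frob2_pair mulr_sumr; apply: eq_bigr => p _; rewrite mxE exprMn. Qed.

Lemma tnormZ a b n (k : R) (X : tensor R a b n) : tnorm (k *: X) = `|k| * tnorm X.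
Proof. by rewrite /tnorm frob2Z sqrtrM ?sqr_ge0 // sqrtr_sqr. Qed.

Lemma tnorm0 a b n : tnorm (0 : tensor R a b n) = 0.
Proof. by rewrite -(scale0r 0) tnormZ normr0 mul0r. Qed.

Lemma tnormD a b n (X Y : tensor R a b n) : tnorm (X + Y) <= tnorm X + tnorm Y.
Proof. by rewrite /tnorm !frob2_pair; under eq_bigr do rewrite mxE; exact: minkowski_sum. Qed.

Lemma tnorm_sum a b n (I : Type) (r : seq I) (P : pred I) (F : I -> tensor R a b n) :
  tnorm (\sum_(i <- r | P i) F i) <= \sum_(i <- r | P i) tnorm (F i).
Proof.
elim/big_ind2: _ => [|x X y Y lex ley|//]; first by rewrite tnorm0.
by rewrite (le_trans (tnormD X Y)) // lerD.
Qed.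

Lemma tprod_is_linear a b c n (A : tensor R a b n) :
  linear (tprod A : tensor R b c n -> tensor R a c n).
Proof.
move=> k X Y; apply: funext => p; rewrite /tprod !fctE scaler_sumr -big_split /=.
by apply: eq_bigr => q _; rewrite mulmxDr scalemxAr.
Qed.

HB.instance Definition _ a b c n (A : tensor R a b n) :=
  GRing.isLinear.Build R (tensor R b c n) (tensor R a c n) _ (tprod A)
    (tprod_is_linear A).

Lemma tprodBl a b c n (A B : tensor R a b n) (X : tensor R b c n) :
  tprod (A - B) X = tprod A X - tprod B X.
Proof.
apply: funext => p; rewrite /tprod !fctE -sumrB.
by apply: eq_bigr => q _; rewrite mulmxBl.
Qed.

Lemma tprodZl a b c n (k : R) (A : tensor R a b n) (X : tensor R b c n) :
  tprod (k *: A) X = k *: tprod A X.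
Proof.
apply: funext => p; rewrite /tprod !fctE scaler_sumr.
by apply: eq_bigr => q _; rewrite scalemxAl.
Qed.

Lemma tensor_sumE a b n (I : Type) (r : seq I) (P : pred I) (F : I -> tensor R a b n) k :
  (\sum_(i <- r | P i) F i) k = \sum_(i <- r | P i) F i k.
Proof. by elim/big_rec2: _ => // i Y X _ <-. Qed.

Lemma tprod_suml a b c n (I : Type) (r : seq I) (P : pred I)
    (F : I -> tensor R a b n) (X : tensor R b c n) :
  tprod (\sum_(i <- r | P i) F i) X = \sum_(i <- r | P i) tprod (F i) X.
Proof.
apply: funext => p; rewrite /tprod !tensor_sumE.
under eq_bigr do rewrite tensor_sumE mulmx_suml.
by rewrite exchange_big.
Qed.

Lemma norm_entry_le_tnorm a b n (X : tensor R a b n) k i j : `|X k i j| <= tnorm X.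
Proof.
rewrite -sqrtr_sqr ler_wsqrtr // frob2_pair (bigD1 (k, (i, j))) //= lerDl.
by rewrite sumr_ge0 // => p _; exact: sqr_ge0.
Qed.

Lemma tnorm_eq0 a b n (X : tensor R a b n) : tnorm X = 0 -> X = 0.
Proof.
move=> X0; apply: funext => k; apply/matrixP => i j; rewrite [RHS]mxE.
apply/normr0_eq0/le_anti; rewrite normr_ge0 andbT.
by rewrite -X0 norm_entry_le_tnorm.
Qed.

Lemma tprod_entry_le a b c n (C : tensor R a b n) (X : tensor R b c n) k i j :
  `|tprod C X k i j| <= (n * b)%:R * (tnorm C * tnorm X).
Proof.
rewrite /tprod summxE (le_trans (ler_norm_sum _ _ _)) //.
apply: (@le_trans _ _ (\sum_(q < n) \sum_(l < b) tnorm C * tnorm X)); last first.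
  by rewrite !sumr_const !card_ord mulr_natl -mulrnA mulnC.
apply: ler_sum => q _; rewrite mxE (le_trans (ler_norm_sum _ _ _)) //.
by apply: ler_sum => l _; rewrite normrM ler_pM ?norm_entry_le_tnorm.
Qed.

Lemma frob2_le_entries a b n (X : tensor R a b n) (K : R) :
  (forall k i j, `|X k i j| <= K) -> frob2 X <= (n * a * b)%:R * K ^+ 2.
Proof.
move=> XK; apply: (@le_trans _ _ (\sum_(k < n) \sum_(i < a) \sum_(j < b) K ^+ 2)).
  do 3 (apply: ler_sum => ? _); rewrite -real_normK ?num_real //.
  by rewrite lerXn2r ?nnegrE ?(le_trans (normr_ge0 _) (XK _ _ _)).
by rewrite !sumr_const !card_ord mulr_natl -!mulrnA [(b * _)%N]mulnC [(a * n)%N]mulnC.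
Qed.

Lemma topnorm_set_ubound a b n (C : tensor R a b n) :
  has_ubound [set r : R | exists X : tensor R b 1 n,
                 frob2 X = 1 /\ r = Num.sqrt (frob2 (tprod C X))].
Proof.
exists (Num.sqrt ((n * a * 1)%:R * ((n * b)%:R * tnorm C) ^+ 2)).
move=> _ [X [X1 ->]]; apply/ler_wsqrtr/frob2_le_entries => k i j.
by rewrite (le_trans (tprod_entry_le _ _ _ _ _)) // /tnorm X1 sqrtr1 mulr1.
Qed.

Lemma topnorm_ge0 a b n (C : tensor R a b n) : 0 <= topnorm C.
Proof.
rewrite /topnorm; set S := [set r | _].
have [->|/set0P[r Sr]] := eqVneq S set0; first by rewrite sup0.
apply: le_trans (ub_le_sup (topnorm_set_ubound C) Sr).
by case: Sr => X [_ ->]; exact: sqrtr_ge0.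
Qed.

Lemma tnorm_tprod_vec_le a b n (C : tensor R a b n) (x : tensor R b 1 n) :
  tnorm (tprod C x) <= topnorm C * tnorm x.
Proof.
have [x0|xn0] := eqVneq (tnorm x) 0.
  by rewrite x0 mulr0 (tnorm_eq0 x0) linear0 tnorm0.
have x_gt0 : 0 < tnorm x by rewrite lt_def xn0 tnorm_ge0.
set y := (tnorm x)^-1 *: x.
have y1 : frob2 y = 1 by rewrite frob2Z -sqr_tnorm -exprMn mulVf ?expr1n.
have Cy_le : tnorm (tprod C y) <= topnorm C.
  by apply: (ub_le_sup (topnorm_set_ubound C)); exists y.
have -> : tprod C x = tnorm x *: tprod C y by rewrite linearZ scalerA divff ?scale1r.
by rewrite tnormZ gtr0_norm // mulrC ler_pM2r.
Qed.

(* [topnorm] is a supremum over single-column tensors; wider tensors are handled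
   column by column. *)
Definition tcol b c n (Y : tensor R b c n) (l : 'I_c) : tensor R b 1 n :=
  fun k => col l (Y k).

Lemma tprod_tcol a b c n (C : tensor R a b n) (Y : tensor R b c n) l :
  tprod C (tcol Y l) = tcol (tprod C Y) l.
Proof.
apply: funext => p; rewrite /tcol /tprod [RHS]colE mulmx_suml.
by apply: eq_bigr => q _; rewrite colE mulmxA.
Qed.

Lemma frob2_tcol b c n (Y : tensor R b c n) : frob2 Y = \sum_(l < c) frob2 (tcol Y l).
Proof.
rewrite /frob2 [RHS]exchange_big; apply: eq_bigr => k _; rewrite [RHS]exchange_big.
by apply: eq_bigr => i _; apply: eq_bigr => l _; rewrite big_ord1 mxE.
Qed.

Lemma tnorm_tprod_le a b c n (C : tensor R a b n) (Y : tensor R b c n) :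
  tnorm (tprod C Y) <= topnorm C * tnorm Y.
Proof.
rewrite -(ler_pXn2r (_ : 0 < 2)%N) ?nnegrE ?mulr_ge0 ?topnorm_ge0 ?tnorm_ge0 //.
rewrite exprMn !sqr_tnorm.
rewrite (frob2_tcol Y) (frob2_tcol (tprod C Y)) mulr_sumr; apply: ler_sum => l _.
rewrite -tprod_tcol -!sqr_tnorm -exprMn.
by rewrite lerXn2r ?nnegrE ?tnorm_tprod_vec_le ?mulr_ge0 ?topnorm_ge0 ?tnorm_ge0.
Qed.

Lemma topnorm_le_kappa a b n (alpha : R) (A : tensor R a b n) (i : 'I_n) :
  topnorm (tsub (@tid R b n) (tscale alpha (tprod (ttr (tslice A i)) (tslice A i))))
  <= kappa alpha A.
Proof. exact: (le_bigmax _ (fun i : 'I_n => topnorm _) i). Qed.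

Lemma topnorm_le_mu a b n (A : tensor R a b n) (i j : 'I_n) :
  i != j -> topnorm (tprod (ttr (tslice A i)) (tslice A j)) <= mu A.
Proof.
move=> neq_ij; apply: le_trans (le_bigmax _ _ i).
exact: (le_bigmax_cond 0 (P := fun j => i != j) (fun j => topnorm _) neq_ij).
Qed.

Lemma subo_Zp m (p q : 'I_m.+1) : subo p q = p - q.
Proof. by apply: val_inj; rewrite /= modnDmr addnBA // ltnW. Qed.

Lemma val_inZp_sub m t (j : 'I_m.+1) :
  val (inZp t - j : 'I_m.+1) = ((t + m.+1 - j) %% m.+1)%N.
Proof. by rewrite /= modnDm addnBA // ltnW. Qed.

Lemma tprod_idl b c m (X : tensor R b c m.+1) : tprod (@tid R b m.+1) X = X.
Proof.
apply: funext => p; rewrite /tprod (bigD1 p) //= big1 ?addr0.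
  by rewrite /tid subo_Zp subrr mul1mx.
move=> q neq_qp; rewrite /tid subo_Zp.
case: eqP => [pq0|_]; last by rewrite mul0mx.
have /eqP : p - q = 0 by exact: val_inj.
by rewrite subr_eq0 eq_sym (negbTE neq_qp).
Qed.

Lemma tprodA a b c d m (A : tensor R a b m.+1) (B : tensor R b c m.+1)
    (C : tensor R c d m.+1) :
  tprod A (tprod B C) = tprod (tprod A B) C.
Proof.
apply: funext => p; rewrite /tprod.
under eq_bigr do rewrite mulmx_sumr.
rewrite exchange_big /=; under [RHS]eq_bigr do rewrite mulmx_suml.
apply: eq_bigr => r _; rewrite (reindex_inj (addIr r)) /=.
by apply: eq_bigr => s _; rewrite !subo_Zp mulmxA addrK opprD addrA addrAC.
Qed.

Lemma sum_tslice a b n (A : tensor R a b n) : \sum_(k < n) tslice A k = A.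
Proof.
apply: funext => p; rewrite tensor_sumE (bigD1 p) //= big1 ?addr0 /tslice ?eqxx //.
by move=> k neq_kp; rewrite eq_sym (negbTE (neq_kp : val k != val p)).
Qed.

Lemma tprod_slices a b c m t (A : tensor R a b m.+1) (X : tensor R b c m.+1) :
  tprod A X = \sum_(j < m.+1) tprod (tslice A (inZp t - j)%R) X.
Proof.
by rewrite -{1}(sum_tslice A) tprod_suml (reindex_inj (subrI (inZp t))).
Qed.

Section Descent.
Variables (a b c n : nat) (alpha : R) (A : tensor R a b n) (B : tensor R a c n).

Local Notation X := (cfsd alpha A B).

(* For j > t the truncated difference t - j is 0 and X 0 = 0, which is the
   convention X(t) = 0 for t <= 0. *)
Lemma nth_cfsd_hist t j : nth (@tzero R b c n) (cfsd_hist alpha A B t) j = X (t - j).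
Proof. by elim: t j => [|t IH] [|j] //=; rewrite nth_nil. Qed.

Lemma cfsdS t :
  X t.+1 = X t + alpha *: tprod (ttr (tslice A (t %% n)%N))
             (B - \sum_(j < n) tprod (tslice A ((t + n - j) %% n)%N) (X (t - j))).
Proof.
rewrite [X t.+1]/cfsd /= /cfsd_step; congr (_ + alpha *: tprod _ (B - _)).
elim/big_rec2: _ => // j Y Z _ ->.
by rewrite nth_cfsd_hist.
Qed.

End Descent.

Section ErrorRecursion.
Variables (a b c m : nat) (alpha : R).
Variables (A : tensor R a b m.+1) (B : tensor R a c m.+1) (Xs : tensor R b c m.+1).
Hypothesis AXs : tprod A Xs = B.

Local Notation E t := (cfsd alpha A B t - Xs).

Lemma cfsd_errorS t :
  E t.+1 = E t - alpha *: \sum_(j < m.+1)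
    tprod (tprod (ttr (tslice A (inZp t : 'I_m.+1))) (tslice A (inZp t - j)%R)) (E (t - j)).
Proof.
have residual : B - \sum_(j < m.+1) tprod (tslice A ((t + m.+1 - j) %% m.+1)%N)
                                         (cfsd alpha A B (t - j))
    = - \sum_(j < m.+1) tprod (tslice A (inZp t - j)%R) (E (t - j)).
  rewrite -AXs (tprod_slices t) -sumrB -sumrN; apply: eq_bigr => j _.
  by rewrite -val_inZp_sub linearB opprB.
rewrite cfsdS residual linearN linear_sum scalerN addrAC.
by congr (_ - _ *: _); apply: eq_bigr => j _; exact: tprodA.
Qed.

Hypothesis alpha_gt0 : 0 < alpha.

Lemma tnorm_cfsd_errorS t :
  tnorm (E t.+1) <= kappa alpha A * tnorm (E t)
                    + alpha * mu A * \sum_(j < m) tnorm (E (t - j.+1)%N).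
Proof.
set i : 'I_m.+1 := inZp t.
pose C (j : 'I_m.+1) := tprod (ttr (tslice A i)) (tslice A (i - j)%R).
have diag : E t - alpha *: tprod (C 0) (E t)
    = tprod (tsub (@tid R b m.+1) (tscale alpha (C 0))) (E t).
  by rewrite tprodBl tprodZl tprod_idl.
rewrite cfsd_errorS -/i big_ord_recl subn0 scalerDr opprD addrA diag.
apply: le_trans (tnormD _ _) _; apply: lerD.
  apply: le_trans (tnorm_tprod_le _ _) _.
  by rewrite ler_wpM2r ?tnorm_ge0 // /C subr0 topnorm_le_kappa.
rewrite -scaleNr tnormZ normrN gtr0_norm // -mulrA mulr_sumr.
apply: ler_wpM2l; first exact: ltW.
apply: le_trans (tnorm_sum _ _ _) _; apply: ler_sum => j _.
rewrite lift0; apply: le_trans (tnorm_tprod_le _ _) _.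
rewrite ler_wpM2r ?tnorm_ge0 // topnorm_le_mu //.
by rewrite eq_sym subr_eq addrC -subr_eq subrr eq_sym.
Qed.

End ErrorRecursion.
End Tensors.

Theorem theorem1 (R : realType) (n1 n2 n3 n : nat)
  (A : tensor R n1 n2 n) (B : tensor R n1 n3 n) (Xs : tensor R n2 n3 n)
  (alpha : R) :
  tprod A Xs = B ->
  (forall Y : tensor R n2 n3 n, tprod A Y = B -> Y = Xs) ->
  0 < alpha ->
  kappa alpha A + alpha * mu A * (n - 1)%N%:R < 1 ->
  frob2 (tsub (cfsd alpha A B t) Xs) @[t --> \oo] --> 0.
Proof.
move=> AXs _ alpha_gt0 rho_lt1.
case: n => [|m] in A B Xs AXs rho_lt1 *.
  have -> : (fun t => frob2 (tsub (cfsd alpha A B t) Xs)) = fun=> 0.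
    by apply: funext => t; rewrite /frob2 big_ord0.
  exact: (@cvg_cst R^o).
rewrite subn1 /= in rho_lt1.
set E := fun t => cfsd alpha A B t - Xs.
set rho := kappa alpha A + alpha * mu A * m%:R in rho_lt1.
have kappa_ge0 : 0 <= kappa alpha A by exact: bigmax_ge_id.
have alpha_mu_ge0 : 0 <= alpha * mu A by rewrite mulr_ge0 ?bigmax_ge_id // ltW.
have decay := delayed_contraction kappa_ge0 alpha_mu_ge0 (fun t => tnorm_ge0 (E t))
  (ltW rho_lt1) (tnorm_cfsd_errorS AXs alpha_gt0).
have rho_ge0 : 0 <= rho := addr_ge0 kappa_ge0 (mulr_ge0 alpha_mu_ge0 (ler0n _ _)).
have E_cvg : tnorm (E t) @[t --> \oo] --> 0.
  apply: (@squeeze_cvgr _ _ _ _ (fun=> 0) (fun t => tnorm (E 0%N) * rho ^+ (t %/ m.+1))).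
  - by apply: nearW => t; rewrite tnorm_ge0 decay.
  - exact: (@cvg_cst R^o).
  - by rewrite -(mulr0 (tnorm (E 0%N))); apply: cvgMl_tmp; exact: cvg_expr_divn.
under eq_fun do rewrite -sqr_tnorm expr2.
by rewrite -(mulr0 0); exact: cvgM.
Qed.
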